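(* Let $A$ be a ring and $I\subset A$ an ideal. (1) $A$ is $I$-adically separated (resp. $I$-adically complete) if and only if every $I$-adic Cauchy sequence consisting of elements of $I$ has at most one (resp. exactly one) limit in $I$. (2) Let $B$ be another ring with ideal $J$. If $I\cong J$ as (possibly non-unital) rings, then $A$ is $I$-adically separated (resp. complete) if and only if $B$ is $J$-adically separated (resp. complete).
   Context: Rings are commutative with $1$. ''$I$-adically complete'' means Hausdorff complete for the $I$-adic topology. An $I$-adic Cauchy sequence in $I$ is a sequence $\{x_n\}$ in $I$ with $x_n\equiv x_m \bmod I^n$ for $n\le m$ (equivalently, Cauchy for the $I$-adic topology). *)

From HB Require Import structures.
From mathcomp Require Import all_boot all_order all_algebra.
Set Implicit Arguments. Unset Strict Implicit. Unset Printing Implicit Defensive.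
Import GRing.Theory.
Local Open Scope ring_scope.

(* Rings are commutative with 1 (the zero ring is allowed): comPzRingType.
   Ideals are represented as Prop-valued predicates. *)
Definition is_ideal (A : comPzRingType) (I : A -> Prop) : Prop :=
  [/\ I 0, (forall x y, I x -> I y -> I (x + y)) & (forall a x, I x -> I (a * x))].

Fixpoint ideal_pow (A : comPzRingType) (I : A -> Prop) (n : nat) : A -> Prop :=
  match n with
  | 0 => fun _ => True
  | n'.+1 => fun x => exists s : seq (A * A),
      (forall p, p \in s -> ideal_pow I n' p.1 /\ I p.2) /\
      x = \sum_(p <- s) p.1 * p.2
  end.

Definition adic_limit (A : comPzRingType) (I : A -> Prop) (x : nat -> A) (y : A) : Prop :=
  forall n, exists N, forall k, (N <= k)%N -> ideal_pow I n (x k - y).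

Definition adic_cauchy (A : comPzRingType) (I : A -> Prop) (x : nat -> A) : Prop :=
  forall n, exists N, forall k m, (N <= k)%N -> (N <= m)%N -> ideal_pow I n (x k - x m).

(* I-adic Cauchy sequence in the sense of the paper: x_n = x_m mod I^n for n <= m *)
Definition adic_cauchy_std (A : comPzRingType) (I : A -> Prop) (x : nat -> A) : Prop :=
  forall n m, (n <= m)%N -> ideal_pow I n (x n - x m).

Definition adic_separated (A : comPzRingType) (I : A -> Prop) : Prop :=
  forall x : A, (forall n, ideal_pow I n x) -> x = 0.

(* I-adically complete: Hausdorff and complete for the I-adic topology
   (first countable, so sequential completeness suffices) *)
Definition adic_complete (A : comPzRingType) (I : A -> Prop) : Prop :=
  adic_separated I /\ forall x : nat -> A, adic_cauchy I x -> exists y, adic_limit I x y.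

Definition ideal_ring_iso (A B : comPzRingType) (I : A -> Prop) (J : B -> Prop) : Prop :=
  exists f : A -> B,
    [/\ (forall x, I x -> J (f x)),
        (forall x y, I x -> I y -> f (x + y) = f x + f y),
        (forall x y, I x -> I y -> f (x * y) = f x * f y),
        (forall x y, I x -> I y -> f x = f y -> x = y)
      & (forall z, J z -> exists x, I x /\ f x = z)].

From mathcomp Require Import all_boot all_order all_algebra.
From mathcomp Require Import ring.
From Stdlib Require Import ClassicalEpsilon.
Set Implicit Arguments. Unset Strict Implicit. Unset Printing Implicit Defensive.
Import GRing.Theory.
Local Open Scope ring_scope.

(* A nonzero [x] in every [I^n] is exactly a constant sequence in [I] with the
   two limits [x] and [0]. A Cauchy sequence [x] has a nondecreasing modulus
   [N]; then [y n := x (N n)] satisfies [y n = y m mod I^n] for [n <= m], and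
   [y n.+1 - y 1] is such a sequence inside [I], whose limit shifted by [y 1]
   is a limit of [x]. So both properties only involve [I] and its powers, and
   a ring isomorphism [I ~ J] carries [I^n] onto [J^n] for [n >= 1], these
   powers being generated by products of elements of [I]. *)

Section Ideal.
Variables (A : comPzRingType) (P : A -> Prop).
Hypothesis hP : is_ideal P.

Lemma ideal0 : P 0. Proof. by case: hP. Qed.

Lemma idealD x y : P x -> P y -> P (x + y). Proof. by case: hP => _ + _; apply. Qed.

Lemma idealMl a x : P x -> P (a * x). Proof. by case: hP => _ _; apply. Qed.

Lemma idealMr a x : P x -> P (x * a). Proof. by rewrite mulrC; apply: idealMl. Qed.

Lemma idealN x : P x -> P (- x). Proof. by rewrite -mulN1r; apply: idealMl. Qed.

Lemma idealB x y : P x -> P y -> P (x - y).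
Proof. by move=> Px Py; apply: idealD (idealN Py). Qed.

Lemma ideal_sum (T : eqType) (s : seq T) (F : T -> A) :
  (forall t, t \in s -> P (F t)) -> P (\sum_(t <- s) F t).
Proof. by move=> sP; rewrite big_seq; apply: big_ind; [apply: ideal0|apply: idealD|]. Qed.

End Ideal.

Section IdealPow.
Variables (A : comPzRingType) (I : A -> Prop).
Hypothesis hI : is_ideal I.

Lemma is_ideal_pow n : is_ideal (ideal_pow I n).
Proof.
elim: n => [|n IHn] //; split.
- by exists [::]; rewrite big_nil.
- move=> _ _ [s [sI ->]] [t [tI ->]]; exists (s ++ t); rewrite big_cat; split=> //.
  by move=> p; rewrite mem_cat => /orP[/sI|/tI].
- move=> a _ [s [sI ->]]; exists [seq (a * p.1, p.2) | p <- s]; split.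
    by move=> _ /mapP[p /sI[p1 p2] ->]; split=> //; apply: idealMl.
  by rewrite big_map mulr_sumr; apply: eq_bigr => p _; rewrite mulrA.
Qed.

Lemma ideal_powS n x : ideal_pow I n.+1 x -> ideal_pow I n x.
Proof.
move=> [s [sI ->]]; apply: (ideal_sum (is_ideal_pow n)) => p /sI[p1 _].
exact: idealMr (is_ideal_pow n) _ _ p1.
Qed.

Lemma ideal_pow_le m n x : (m <= n)%N -> ideal_pow I n x -> ideal_pow I m x.
Proof.
move=> /subnKC <-; elim: (n - m)%N => [|d IHd]; first by rewrite addn0.
by rewrite addnS => /ideal_powS.
Qed.

Lemma ideal_pow1 x : ideal_pow I 1 x <-> I x.
Proof.
split=> [[s [sI ->]]|Ix].
  by apply: (ideal_sum hI) => p /sI[_ p2]; apply: idealMl.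
by exists [:: (1, x)]; rewrite big_seq1 mul1r; split=> // p; rewrite inE => /eqP->.
Qed.

Lemma ideal_powS_ideal n x : ideal_pow I n.+1 x -> I x.
Proof. by move=> /(ideal_pow_le (ltn0Sn n))/ideal_pow1. Qed.

End IdealPow.

Section AdicLimits.
Variables (A : comPzRingType) (I : A -> Prop).
Hypothesis hI : is_ideal I.

Definition adic_limits_unique_in :=
  forall x : nat -> A, (forall n, I (x n)) -> adic_cauchy_std I x ->
    forall y z, I y -> I z -> adic_limit I x y -> adic_limit I x z -> y = z.

Definition adic_limits_exist_unique_in :=
  forall x : nat -> A, (forall n, I (x n)) -> adic_cauchy_std I x ->
    (exists y, I y /\ adic_limit I x y) /\
    (forall y z, I y -> I z -> adic_limit I x y -> adic_limit I x z -> y = z).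

Lemma eq_adic_limit u v y :
  (forall k, u k = v k) -> adic_limit I u y -> adic_limit I v y.
Proof. by move=> uv uy n; have [N HN] := uy n; exists N => k; rewrite -uv; apply: HN. Qed.

Lemma adic_limit_unique x y z :
  adic_separated I -> adic_limit I x y -> adic_limit I x z -> y = z.
Proof.
move=> sepI xy xz; apply/eqP; rewrite -subr_eq0; apply/eqP/sepI => n.
have [[N1 HN1] [N2 HN2]] := (xy n, xz n).
have -> : y - z = (x (N1 + N2)%N - z) - (x (N1 + N2)%N - y) by ring.
apply: (idealB (is_ideal_pow I n)); [apply: HN2; apply: leq_addl|apply: HN1].
exact: leq_addr.
Qed.

Lemma adic_limit_ideal x y : (forall n, I (x n)) -> adic_limit I x y -> I y.
Proof.
move=> xI /(_ 1%N)[N /(_ N (leqnn N))/(ideal_pow1 hI) xNy].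
by rewrite -[y](subKr (x N)); apply: (idealB hI).
Qed.

Lemma adic_cauchy_std_cauchy x : adic_cauchy_std I x -> adic_cauchy I x.
Proof.
move=> xC n; exists n => k m nk nm.
have -> : x k - x m = (x n - x m) - (x n - x k) by ring.
by apply: (idealB (is_ideal_pow I n)); apply: xC.
Qed.

Lemma adic_cauchy_modulus x : adic_cauchy I x ->
  exists N : nat -> nat, {homo N : m n / (m <= n)%N} /\
    forall n k m, (N n <= k)%N -> (N n <= m)%N -> ideal_pow I n (x k - x m).
Proof.
move=> /choice[N HN]; exists (fun n => \max_(i < n.+1) N i); split.
  move=> m n mn; apply/bigmax_leqP => i _.
  exact: leq_trans (leq_bigmax (widen_ord (mn : (m.+1 <= n.+1)%N) i)).
move=> n k m Nk Nm; have Nn : (N n <= \max_(i < n.+1) N i)%N := leq_bigmax ord_max.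
by apply: HN; apply: leq_trans Nn _.
Qed.

Section Modulus.
Variables (x : nat -> A) (N : nat -> nat).
Hypothesis N_homo : {homo N : m n / (m <= n)%N}.
Hypothesis N_modulus :
  forall n k m, (N n <= k)%N -> (N n <= m)%N -> ideal_pow I n (x k - x m).

Lemma adic_cauchy_std_subseq : adic_cauchy_std I (fun n => x (N n)).
Proof. by move=> n m nm; apply: N_modulus => //; apply: N_homo. Qed.

Lemma adic_limit_subseq y : adic_limit I (fun n => x (N n)) y -> adic_limit I x y.
Proof.
move=> xNy n; have [M HM] := xNy n; exists (N n) => k Nk.
have -> : x k - y = (x k - x (N (maxn n M))) + (x (N (maxn n M)) - y) by ring.
apply: (idealD (is_ideal_pow I n)); last by apply: HM; apply: leq_maxr.
by apply: N_modulus => //; apply: N_homo; apply: leq_maxl.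
Qed.

End Modulus.

Definition recentred (y : nat -> A) n := y n.+1 - y 1%N.

Lemma recentred_ideal y : adic_cauchy_std I y -> forall n, I (recentred y n).
Proof.
by move=> yC n; rewrite /recentred -opprB; apply/(idealN hI)/(ideal_pow1 hI)/yC.
Qed.

Lemma adic_cauchy_std_recentred y :
  adic_cauchy_std I y -> adic_cauchy_std I (recentred y).
Proof.
move=> yC n m nm; have -> : recentred y n - recentred y m = y n.+1 - y m.+1.
  by rewrite /recentred; ring.
by apply: ideal_powS; apply: yC.
Qed.

Lemma adic_limit_recentred y w :
  adic_limit I (recentred y) w -> adic_limit I y (w + y 1%N).
Proof.
move=> yw n; have [M HM] := yw n; exists M.+1 => -[//|k] Mk.
have -> : y k.+1 - (w + y 1%N) = recentred y k - w by rewrite /recentred; ring.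
exact: HM.
Qed.

Lemma adic_separatedP : adic_separated I <-> adic_limits_unique_in.
Proof.
split=> [sepI x _ _ y z _ _|uniqI x xpow]; first exact: adic_limit_unique.
have Ix : I x by apply/(ideal_pow1 hI).
have pow0 n : ideal_pow I n 0 by apply: ideal0 (is_ideal_pow I n).
apply: (uniqI (fun=> x)) => //.
- by move=> n m _; rewrite subrr.
- exact: ideal0 hI.
- by move=> n; exists 0%N => k _; rewrite subrr.
- by move=> n; exists 0%N => k _; rewrite subr0.
Qed.

Lemma adic_completeP : adic_complete I <-> adic_limits_exist_unique_in.
Proof.
split=> [[sepI limI] x xI xC|limI].
  split; last by move: x xI xC; apply/adic_separatedP.
  have [y xy] := limI x (adic_cauchy_std_cauchy xC).
  by exists y; split=> //; apply: adic_limit_ideal xy.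
split; first by apply/adic_separatedP => x xI xC; case: (limI x xI xC).
move=> x /adic_cauchy_modulus[N [N_homo N_mod]].
have yC := adic_cauchy_std_subseq N_homo N_mod.
have [[w [_ zw]] _] := limI _ (recentred_ideal yC) (adic_cauchy_std_recentred yC).
exists (w + x (N 1%N)); apply: (adic_limit_subseq N_homo N_mod).
exact: adic_limit_recentred.
Qed.

End AdicLimits.

Definition ideal_hom (A B : comPzRingType) (I : A -> Prop) (J : B -> Prop) (f : A -> B) :=
  [/\ forall x, I x -> J (f x),
      forall x y, I x -> I y -> f (x + y) = f x + f y
    & forall x y, I x -> I y -> f (x * y) = f x * f y].

Definition ideal_iso (A B : comPzRingType) (I : A -> Prop) (J : B -> Prop) f g :=
  [/\ ideal_hom I J f, ideal_hom J I g,
      forall x, I x -> g (f x) = x & forall y, J y -> f (g y) = y].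

Lemma ideal_iso_sym (A B : comPzRingType) (I : A -> Prop) (J : B -> Prop) f g :
  ideal_iso I J f g -> ideal_iso J I g f.
Proof. by case. Qed.

Section IdealHom.
Variables (A B : comPzRingType) (I : A -> Prop) (J : B -> Prop) (f : A -> B).
Hypotheses (hI : is_ideal I) (hJ : is_ideal J) (hf : ideal_hom I J f).

Lemma ideal_hom_ideal x : I x -> J (f x). Proof. by case: hf => + _ _; apply. Qed.

Lemma ideal_homD x y : I x -> I y -> f (x + y) = f x + f y.
Proof. by case: hf => _ + _; apply. Qed.

Lemma ideal_homM x y : I x -> I y -> f (x * y) = f x * f y.
Proof. by case: hf => _ _; apply. Qed.

Lemma ideal_hom0 : f 0 = 0.
Proof.
apply: (@addrI _ (f 0)); rewrite addr0 -ideal_homD ?addr0 //; exact: ideal0 hI.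
Qed.

Lemma ideal_homB x y : I x -> I y -> f (x - y) = f x - f y.
Proof.
move=> Ix Iy; apply: (@addIr _ (f y)).
by rewrite subrK -ideal_homD ?subrK //; apply: idealB.
Qed.

Lemma ideal_hom_sum (s : seq (A * A)) : (forall p, p \in s -> I p.1 /\ I p.2) ->
  f (\sum_(p <- s) p.1 * p.2) = \sum_(p <- s) f p.1 * f p.2.
Proof.
elim: s => [|p s IHs] sI; first by rewrite !big_nil ideal_hom0.
have [p1 p2] := sI p (mem_head p s).
have {}sI q : q \in s -> I q.1 /\ I q.2 by move=> qs; apply: sI; rewrite inE qs orbT.
rewrite !big_cons ideal_homD ?ideal_homM ?IHs //; first exact: idealMl.
by apply: (ideal_sum hI) => q /sI[q1 _]; apply: idealMr.
Qed.

Lemma ideal_hom_pow n x : I x -> ideal_pow I n x -> ideal_pow J n (f x).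
Proof.
elim: n x => [//|[|n] IHn] x Ix.
  by move=> _; apply/(ideal_pow1 hJ)/ideal_hom_ideal.
move=> [s [sI ->]].
have sI' p : p \in s -> I p.1 /\ I p.2.
  by move=> /sI[p1 p2]; split=> //; apply: ideal_powS_ideal hI _ _ p1.
rewrite ideal_hom_sum //; exists [seq (f p.1, f p.2) | p <- s]; rewrite big_map.
split=> // _ /mapP[p ps ->]; have [p1 p2] := sI p ps; have [Ip1 _] := sI' p ps.
by split; [apply: IHn|apply: ideal_hom_ideal].
Qed.

Lemma ideal_hom_limit u y : (forall k, I (u k)) -> I y ->
  adic_limit I u y -> adic_limit J (fun k => f (u k)) (f y).
Proof.
move=> uI Iy uy n; have [N HN] := uy n; exists N => k Nk.
by rewrite -ideal_homB //; apply: ideal_hom_pow; [apply: idealB|apply: HN].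
Qed.

Lemma ideal_hom_cauchy_std u : (forall k, I (u k)) ->
  adic_cauchy_std I u -> adic_cauchy_std J (fun k => f (u k)).
Proof.
move=> uI uC n m nm.
by rewrite -ideal_homB //; apply: ideal_hom_pow; [apply: idealB|apply: uC].
Qed.

End IdealHom.

Section IdealIso.
Variables (A B : comPzRingType) (I : A -> Prop) (J : B -> Prop).
Hypotheses (hI : is_ideal I) (hJ : is_ideal J).

Lemma ideal_ring_iso_inverse : ideal_ring_iso I J -> exists f g, ideal_iso I J f g.
Proof.
move=> [f [fI fD fM f_inj f_surj]].
have /choice[g gK] y : exists x, J y -> I x /\ f x = y.
  by case: (classic (J y)) => [/f_surj[x]|Jy]; [exists x|exists 0].
have fK x : I x -> g (f x) = x.
  by move=> Ix; have [Igfx fgfx] := gK _ (fI x Ix); apply: f_inj Igfx Ix fgfx.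
have gI y : J y -> I (g y) by move=> /gK[].
have gE y : J y -> f (g y) = y by move=> /gK[].
exists f, g; split=> //; split=> // y z Jy Jz; have [Igy Igz] := (gI y Jy, gI z Jz).
  by rewrite -{1}(gE y) // -{1}(gE z) // -fD // fK //; apply: idealD.
by rewrite -{1}(gE y) // -{1}(gE z) // -fM // fK //; apply: idealMl.
Qed.

Variables (f : A -> B) (g : B -> A).
Hypothesis fg : ideal_iso I J f g.

Lemma adic_separated_iso : adic_separated I -> adic_separated J.
Proof.
case: fg => hf hg _ gK sepI y Jny; have Jy : J y by apply/(ideal_pow1 hJ).
rewrite -(gK y Jy) (sepI (g y)) ?(ideal_hom0 hI hf) // => n.
exact: (ideal_hom_pow hJ hI hg) Jy (Jny n).
Qed.

Lemma adic_limits_exist_unique_iso :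
  adic_limits_exist_unique_in I -> adic_limits_exist_unique_in J.
Proof.
case: fg => hf hg _ gK limI z zJ zC.
have gzI k : I (g (z k)) := ideal_hom_ideal hg (zJ k).
have [[y [Iy gzy]] uniqI] := limI _ gzI (ideal_hom_cauchy_std hJ hI hg zJ zC).
split.
  exists (f y); split; first exact: (ideal_hom_ideal hf Iy).
  exact: eq_adic_limit (fun k => gK _ (zJ k)) (ideal_hom_limit hI hJ hf gzI Iy gzy).
move=> y1 y2 Jy1 Jy2 zy1 zy2; rewrite -(gK y1) // -(gK y2) //; congr f.
have gzy1 := ideal_hom_limit hJ hI hg zJ Jy1 zy1.
have gzy2 := ideal_hom_limit hJ hI hg zJ Jy2 zy2.
exact: (uniqI _ _ (ideal_hom_ideal hg Jy1) (ideal_hom_ideal hg Jy2) gzy1 gzy2).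
Qed.

End IdealIso.

Theorem lemma3p9 (A : comPzRingType) (I : A -> Prop) (hI : is_ideal I) :
  [/\
   (adic_separated I <->
      forall x : nat -> A, (forall n, I (x n)) -> adic_cauchy_std I x ->
        forall y z, I y -> I z -> adic_limit I x y -> adic_limit I x z -> y = z),
   (adic_complete I <->
      forall x : nat -> A, (forall n, I (x n)) -> adic_cauchy_std I x ->
        (exists y, I y /\ adic_limit I x y) /\
        (forall y z, I y -> I z -> adic_limit I x y -> adic_limit I x z -> y = z))
  & (forall (B : comPzRingType) (J : B -> Prop), is_ideal J ->
       ideal_ring_iso I J ->
       (adic_separated I <-> adic_separated J) /\
       (adic_complete I <-> adic_complete J))].
Proof.
split; [exact: adic_separatedP | exact: adic_completeP |].
move=> B J hJ /(ideal_ring_iso_inverse hI)[f [g fg]].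
have gf := ideal_iso_sym fg.
split; split.
- exact: (adic_separated_iso hI hJ fg).
- apply: (adic_separated_iso hJ hI gf).
- by move/(adic_completeP hI)/(adic_limits_exist_unique_iso hI hJ fg)/(adic_completeP hJ).
- by move/(adic_completeP hJ)/(adic_limits_exist_unique_iso hJ hI gf)/(adic_completeP hI).
Qed.
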